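(* Let $A\in\mathbb{R}^{n\times n}$ be symmetric with orthonormal eigenbasis $\vec{q}_1,\dots,\vec{q}_n$, $A\vec{q}_i=\lambda_i\vec{q}_i$, let $s$ be the number of distinct eigenvalues of $A$, and let $\vec{x}_0\in\mathbb{R}^n$ satisfy $\vec{q}_i^\top\vec{x}_0\neq 0$ for all $i$. Let $\vec{x}_{t+1}=A\vec{x}_t$, $X_k=[\vec{x}_0\ \cdots\ \vec{x}_k]$, $Y_k=[\vec{x}_1\ \cdots\ \vec{x}_{k+1}]$ and $\hat{A}_k=Y_kX_k^{\dagger}$. Assume $A$ has at least one eigenvalue of algebraic multiplicity greater than one, and let $\lambda^*=\max_{i:\,m(\lambda_i)>1}|\lambda_i|$. If $k\ge s$, then $\|A-\hat{A}_k\|_2=\lambda^*$.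
   Context: $m(\lambda)$ denotes the algebraic multiplicity of the eigenvalue $\lambda$; $M^{\dagger}$ is the Moore–Penrose pseudo-inverse; $\|\cdot\|_2$ is the spectral norm. *)

From HB Require Import structures.
From mathcomp Require Import all_boot all_order all_algebra.
From mathcomp Require Import boolp classical_sets reals.
Set Implicit Arguments. Unset Strict Implicit. Unset Printing Implicit Defensive.
Import Order.TTheory GRing.Theory Num.Theory.
Local Open Scope ring_scope.
Local Open Scope classical_set_scope.

Definition is_MP_inverse (R : realType) (m p : nat)
  (M : 'M[R]_(m, p)) (P : 'M[R]_(p, m)) : Prop :=
  [/\ M *m P *m M = M, P *m M *m P = P,
      (M *m P)^T = M *m P & (P *m M)^T = P *m M].

(* Moore-Penrose pseudo-inverse M^dagger (chosen; it exists and is unique). *)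
Definition pinvMP (R : realType) (m p : nat) (M : 'M[R]_(m, p)) : 'M[R]_(p, m) :=
  xget 0 [set P | is_MP_inverse M P].

Definition norm2 (R : realType) (n : nat) (v : 'cV[R]_n) : R :=
  Num.sqrt (\sum_(i < n) v i 0 ^+ 2).

Definition spec_norm (R : realType) (m p : nat) (M : 'M[R]_(m, p)) : R :=
  sup [set r : R | exists v : 'cV[R]_p, norm2 v = 1 /\ r = norm2 (M *m v)].

Definition iter_x (R : realType) (n : nat) (A : 'M[R]_n) (x0 : 'cV[R]_n) (t : nat)
  : 'cV[R]_n := A ^+ t *m x0.

Definition Xmat (R : realType) (n : nat) (A : 'M[R]_n) (x0 : 'cV[R]_n) (k : nat)
  : 'M[R]_(n, k.+1) := \matrix_(i, j) iter_x A x0 j i 0.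
Definition Ymat (R : realType) (n : nat) (A : 'M[R]_n) (x0 : 'cV[R]_n) (k : nat)
  : 'M[R]_(n, k.+1) := \matrix_(i, j) iter_x A x0 j.+1 i 0.

Definition alg_mult (R : realType) (n : nat) (A : 'M[R]_n) (l : R) : nat :=
  mup l (char_poly A).

(* Write A = Q diag(lam) Q^T and c = Q^T x0 for the eigen-coordinates of x0.
   Since Y_k = A X_k, the residual is A (I - X_k X_k^dagger), i.e. A applied to the
   component of v orthogonal to the Krylov space.  In eigen-coordinates z, that
   orthogonality says sum_i c_i lam_i^t z_i = 0 for all t <= k; as k + 1 is at
   least the number of distinct eigenvalues, interpolation forces z_i = 0 at
   every simple eigenvalue, so the residual has norm at most lam*.  Conversely,
   if lam_i = lam_j with i <> j and |lam_i| = lam*, then c_j q_i - c_i q_j is an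
   eigenvector orthogonal to every Krylov vector, on which the bound is attained. *)

From HB Require Import structures.
From mathcomp Require Import all_boot all_order all_algebra.
From mathcomp Require Import boolp classical_sets reals.
From mathcomp Require Import ring.
Import Order.TTheory GRing.Theory Num.Theory.
Set Implicit Arguments. Unset Strict Implicit. Unset Printing Implicit Defensive.
Local Open Scope ring_scope.

Lemma moments_eq0_simple (R : idomainType) n k (lam w : 'I_n -> R) (i : 'I_n) :
  (size (undup [seq lam j | j <- enum 'I_n]) <= k.+1)%N ->
  (forall t : 'I_k.+1, \sum_j w j * lam j ^+ t = 0) ->
  (forall j, lam j = lam i -> j = i) -> w i = 0.
Proof.
move=> distinct_le moments_eq0 simple_i.
set eigs := undup [seq lam j | j <- enum 'I_n].
have eigs_lam j : lam j \in eigs by rewrite mem_undup map_f ?mem_enum.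
(* [p] vanishes at every eigenvalue except [lam i] and has degree at most [k]. *)
pose p := \prod_(mu <- eigs | mu != lam i) ('X - mu%:P).
have p_lam_j j : j != i -> root p (lam j).
  move=> ji; rewrite /p -big_filter root_prod_XsubC mem_filter eigs_lam andbT.
  by apply: contra ji => /eqP/simple_i->.
have p_lam_i : ~~ root p (lam i).
  by rewrite /p -big_filter root_prod_XsubC mem_filter eqxx.
have size_p : (size p <= k.+1)%N.
  rewrite /p -big_filter size_prod_XsubC size_filter (leq_trans _ distinct_le) //.
  rewrite -(count_predC (fun mu => mu != lam i)) -addn1 leq_add2l.
  by rewrite -has_count; apply/hasP; exists (lam i); rewrite /= ?eqxx.
have : \sum_j w j * p.[lam j] = 0.
  under eq_bigr do rewrite (horner_coef_wide _ size_p) mulr_sumr.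
  rewrite exchange_big big1 // => t _.
  have -> : \sum_j w j * (p`_t * lam j ^+ t) = p`_t * \sum_j w j * lam j ^+ t.
    by rewrite mulr_sumr; apply: eq_bigr => j _; ring.
  by rewrite moments_eq0 mulr0.
rewrite (bigD1 i) //= big1 ?addr0 => [/eqP|j ji]; last first.
  by rewrite (rootP (p_lam_j j ji)) mulr0.
by rewrite mulf_eq0 -rootE (negPf p_lam_i) orbF => /eqP.
Qed.

Section EuclideanNorm.
Variable R : realType.

Definition sqnorm m (u : 'cV[R]_m) : R := \sum_i u i 0 ^+ 2.

Lemma norm2E m (u : 'cV[R]_m) : norm2 u = Num.sqrt (sqnorm u).
Proof. by []. Qed.

Lemma sqnormE m (u : 'cV[R]_m) : sqnorm u = (u^T *m u) 0 0.
Proof. by rewrite mxE; apply: eq_bigr => i _; rewrite mxE expr2. Qed.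

Lemma sqnorm_ge0 m (u : 'cV[R]_m) : 0 <= sqnorm u.
Proof. by apply: sumr_ge0 => i _; apply: sqr_ge0. Qed.

Lemma sqnorm_eq0 m (u : 'cV[R]_m) : (sqnorm u == 0) = (u == 0).
Proof.
apply/idP/eqP => [/eqP u0|->].
  apply/colP => i; apply/eqP; rewrite mxE -sqrf_eq0.
  by move/psumr_eq0P: u0 => -> // j _; apply: sqr_ge0.
by rewrite /sqnorm big1 // => i _; rewrite mxE expr0n.
Qed.

Lemma sqnormZ m a (u : 'cV[R]_m) : sqnorm (a *: u) = a ^+ 2 * sqnorm u.
Proof.
by rewrite /sqnorm mulr_sumr; apply: eq_bigr => i _; rewrite mxE exprMn.
Qed.

Lemma norm2Z m a (u : 'cV[R]_m) : norm2 (a *: u) = `|a| * norm2 u.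
Proof. by rewrite !norm2E sqnormZ sqrtrM ?sqr_ge0 // sqrtr_sqr. Qed.

Lemma norm2_eq0 m (u : 'cV[R]_m) : (norm2 u == 0) = (u == 0).
Proof. by rewrite norm2E sqrtr_eq0 le_eqVlt ltNge sqnorm_ge0 orbF sqnorm_eq0. Qed.

Lemma norm2_normalize m (u : 'cV[R]_m) :
  u != 0 -> norm2 ((norm2 u)^-1 *: u) = 1.
Proof.
rewrite -norm2_eq0 => nu0; rewrite norm2Z ger0_norm ?mulVf //.
by rewrite invr_ge0 norm2E sqrtr_ge0.
Qed.

Lemma sqnorm_orthomx m (Q : 'M[R]_m) (z : 'cV[R]_m) :
  Q^T *m Q = 1%:M -> sqnorm (Q *m z) = sqnorm z.
Proof.
by move=> QtQ; rewrite !sqnormE trmx_mul mulmxA -(mulmxA z^T) QtQ mulmx1.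
Qed.

Lemma sqnorm_sub_proj_le m (P : 'M[R]_m) (v : 'cV[R]_m) :
  P^T = P -> P *m P = P -> sqnorm (v - P *m v) <= sqnorm v.
Proof.
move=> Psym Pidem.
have -> : sqnorm (v - P *m v) = sqnorm v - sqnorm (P *m v).
  rewrite !sqnormE [(v - _)^T]linearB /= trmx_mul Psym !(mulmxBl, mulmxBr).
  rewrite -!mulmxA (mulmxA P) Pidem.
  by rewrite !mxE; ring.
by rewrite lerBlDr lerDl sqnorm_ge0.
Qed.

Lemma sqnorm_diag_mul_le m (d : 'rV[R]_m) (z : 'cV[R]_m) b :
  (forall i, z i 0 != 0 -> `|d 0 i| <= b) ->
  sqnorm (diag_mx d *m z) <= b ^+ 2 * sqnorm z.
Proof.
move=> db; rewrite /sqnorm mulr_sumr; apply: ler_sum => i _.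
rewrite mul_diag_mx mxE exprMn.
have [->|/db dib] := eqVneq (z i 0) 0; first by rewrite expr0n !mulr0.
rewrite ler_wpM2r ?sqr_ge0 // -real_normK ?num_real //.
by rewrite lerXn2r ?nnegrE ?(le_trans _ dib).
Qed.

End EuclideanNorm.

Lemma spec_norm_attained (R : realType) m p (M : 'M[R]_(m, p)) (L : R) :
  (forall v, norm2 v = 1 -> norm2 (M *m v) <= L) ->
  (exists2 v, norm2 v = 1 & norm2 (M *m v) = L) ->
  spec_norm M = L.
Proof.
move=> ub [v v1 Mv]; rewrite /spec_norm; set S := (X in sup X).
have SL : S L by exists v.
have ubS : ubound S L by move=> _ [w [w1 ->]]; apply: ub.
apply/le_anti; rewrite ge_sup ?sup_upper_bound //; first by split; exists L.
by exists L.
Qed.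

Section PseudoInverse.
Variable R : realType.

Lemma row_free_gram_unit r p (G : 'M[R]_(r, p)) :
  row_free G -> G *m G^T \in unitmx.
Proof.
move=> freeG; rewrite -row_free_unit -kermx_eq0; apply/eqP/row_matrixP => i.
set u := row i _.
have uGG : u *m (G *m G^T) = 0 by rewrite -row_mul mulmx_ker row0.
have : sqnorm (u *m G)^T == 0.
  by rewrite sqnormE trmxK trmx_mul mulmxA -(mulmxA u) uGG mul0mx mxE.
rewrite sqnorm_eq0 trmx_eq0 row0 => /eqP uG0.
by apply: (row_free_inj freeG); rewrite uG0 mul0mx.
Qed.

Lemma is_MP_inverse_factor m r p (F : 'M[R]_(m, r)) (G : 'M[R]_(r, p)) :
  row_free F^T -> row_free G ->
  is_MP_inverse (F *m G) (G^T *m invmx (G *m G^T) *m invmx (F^T *m F) *m F^T).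
Proof.
move=> freeF freeG; have uG := row_free_gram_unit freeG.
have := row_free_gram_unit freeF; rewrite trmxK => uF.
set IG := invmx _; set IF := invmx _.
have IGsym : IG^T = IG by rewrite trmx_inv trmx_mul trmxK.
have IFsym : IF^T = IF by rewrite trmx_inv trmx_mul trmxK.
have FG_MP : F *m G *m (G^T *m IG *m IF *m F^T) = F *m IF *m F^T.
  by rewrite !mulmxA -(mulmxA F G) -(mulmxA F) mulmxV // mulmx1.
have MP_FG : G^T *m IG *m IF *m F^T *m (F *m G) = G^T *m IG *m G.
  by rewrite !mulmxA -(mulmxA _ F^T F) -(mulmxA _ IF) mulVmx // mulmx1.
split.
- by rewrite FG_MP !mulmxA -(mulmxA _ F^T F) -(mulmxA F IF) mulVmx // mulmx1.
- rewrite MP_FG !mulmxA -(mulmxA _ G G^T) -(mulmxA _ (G *m G^T)).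
  by rewrite mulmxV // mulmx1.
- by rewrite FG_MP !trmx_mul trmxK IFsym !mulmxA.
- by rewrite MP_FG !trmx_mul trmxK IGsym !mulmxA.
Qed.

Lemma is_MP_inverse_pinvMP m p (M : 'M[R]_(m, p)) : is_MP_inverse M (pinvMP M).
Proof.
have freeF : row_free (col_base M)^T.
  by rewrite /row_free mxrank_tr; apply: col_base_full.
have := is_MP_inverse_factor freeF (row_base_free M); rewrite mulmx_base => MP.
exact: (xgetPex 0 (P := [set P | is_MP_inverse M P]) (ex_intro _ _ MP)).
Qed.

Variables (m p : nat) (X : 'M[R]_(m, p)) (P : 'M[R]_(p, m)).
Hypothesis XP : is_MP_inverse X P.

Lemma MP_proj_sym : (X *m P)^T = X *m P.
Proof. by case: XP. Qed.

Lemma MP_proj_idem : X *m P *m (X *m P) = X *m P.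
Proof. by case: XP => XPX _ _ _; rewrite mulmxA XPX. Qed.

Lemma MP_tr_proj : X^T *m (X *m P) = X^T.
Proof. by case: XP => XPX _ XPsym _; rewrite -XPsym -trmx_mul XPX. Qed.

Lemma MP_proj_orth (v : 'cV[R]_m) : X^T *m v = 0 -> X *m P *m v = 0.
Proof. by move=> Xv0; rewrite -MP_proj_sym trmx_mul -mulmxA Xv0 mulmx0. Qed.

End PseudoInverse.

Lemma char_poly_orthomx_conj (R : comNzRingType) n (Q B : 'M[R]_n) :
  Q *m Q^T = 1%:M -> char_poly (Q *m B *m Q^T) = char_poly B.
Proof.
move=> QQt; rewrite /char_poly /char_poly_mx.
set Qp := map_mx polyC Q.
have QpQpt : Qp *m Qp^T = 1%:M by rewrite map_trmx -map_mxM QQt map_mx1.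
have -> : 'X%:M - map_mx polyC (Q *m B *m Q^T)
          = Qp *m ('X%:M - map_mx polyC B) *m Qp^T.
  rewrite mulmxBr mulmxBl mul_mx_scalar -scalemxAl QpQpt scalemx1.
  by rewrite !map_mxM map_trmx.
by rewrite !det_mulmx mulrAC -det_mulmx QpQpt det1 mul1r.
Qed.

Lemma Ymat_Xmat (R : realType) n (A : 'M[R]_n) x0 k :
  Ymat A x0 k = A *m Xmat A x0 k.
Proof.
apply/matrixP => i j; rewrite mxE /iter_x exprS -mulmxE -mulmxA !mxE.
by apply: eq_bigr => l _; rewrite !mxE.
Qed.

Lemma Xmat_tr_mulE (R : realType) n (A : 'M[R]_n) x0 k (w : 'cV[R]_n)
    (t : 'I_k.+1) :
  ((Xmat A x0 k)^T *m w) t 0 = ((iter_x A x0 t)^T *m w) 0 0.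
Proof. by rewrite !mxE; apply: eq_bigr => l _; rewrite !mxE. Qed.

Section Spectral.
Variables (R : realType) (n : nat) (A Q : 'M[R]_n) (lam : 'I_n -> R).
Hypothesis QtQ : Q^T *m Q = 1%:M.
Hypothesis eigQ : forall i, A *m col i Q = lam i *: col i Q.

Lemma eig_mulmx : A *m Q = Q *m diag_mx (\row_i lam i).
Proof.
apply/matrixP => i j; rewrite mul_mx_diag !mxE mulrC.
have /colP/(_ i) := eigQ j; rewrite !mxE => <-.
by apply: eq_bigr => l _; rewrite !mxE.
Qed.

Lemma eig_decomp : A = Q *m diag_mx (\row_i lam i) *m Q^T.
Proof. by rewrite -eig_mulmx -mulmxA (mulmx1C QtQ) mulmx1. Qed.

Lemma tr_eig_mulmx : Q^T *m A = diag_mx (\row_i lam i) *m Q^T.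
Proof. by rewrite {1}eig_decomp !mulmxA QtQ mul1mx. Qed.

Lemma tr_eig_mulmx_exp t : Q^T *m A ^+ t = diag_mx (\row_i lam i ^+ t) *m Q^T.
Proof.
elim: t => [|t IHt].
  rewrite expr0 mulmx1; apply/matrixP => i j.
  by rewrite mul_diag_mx !mxE mul1r.
rewrite exprSr -mulmxE mulmxA IHt -mulmxA tr_eig_mulmx mulmxA mulmx_diag.
by congr (diag_mx _ *m _); apply/rowP => i; rewrite !mxE exprSr.
Qed.

Lemma char_poly_eig : char_poly A = \prod_i ('X - (lam i)%:P).
Proof.
rewrite {1}eig_decomp char_poly_orthomx_conj ?(mulmx1C QtQ) //.
rewrite char_poly_trig ?diag_mx_is_trig //.
by apply: eq_bigr => i _; rewrite !mxE eqxx mulr1n.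
Qed.

Lemma alg_mult_eig i : alg_mult A (lam i) = #|[pred j | lam j == lam i]|.
Proof.
rewrite /alg_mult char_poly_eig -(big_map lam xpredT (fun x => 'X - x%:P)).
rewrite mu_prod_XsubC count_map -sum1_count -sum1_card.
by apply: eq_bigl => j; rewrite !inE eq_sym.
Qed.

Lemma alg_mult_gt1P i :
  reflect (exists2 j, j != i & lam j = lam i) (1 < alg_mult A (lam i))%N.
Proof.
rewrite alg_mult_eig (cardD1x (j := i)) ?inE // add1n ltnS.
apply: (iffP card_gt0P) => [[j]|[j ji lji]].
  by rewrite inE => /andP[/eqP lji ji]; exists j.
by exists j; rewrite inE ji lji eqxx.
Qed.

Variables (x0 : 'cV[R]_n) (k : nat).

Let c := Q^T *m x0.
Let X := Xmat A x0 k.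
Let L := \big[Num.max/0]_(i | (1 < alg_mult A (lam i))%N) `|lam i|.

Lemma Xmat_tr_mul_eig (w : 'cV[R]_n) (t : 'I_k.+1) :
  (X^T *m w) t 0 = ((diag_mx (\row_i lam i ^+ t) *m c)^T *m (Q^T *m w)) 0 0.
Proof.
rewrite Xmat_tr_mulE -[w in LHS]mul1mx -(mulmx1C QtQ) -mulmxA mulmxA.
rewrite -[_ *m Q]trmxK trmx_mul trmxK /iter_x (mulmxA Q^T) tr_eig_mulmx_exp.
by rewrite -!mulmxA.
Qed.

Hypothesis c_neq0 : forall i, c i 0 != 0.
Hypothesis distinct_le : (size (undup [seq lam i | i <- enum 'I_n]) <= k.+1)%N.

Lemma Xmat_orth_simple (w : 'cV[R]_n) i :
  X^T *m w = 0 -> ~~ (1 < alg_mult A (lam i))%N -> (Q^T *m w) i 0 = 0.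
Proof.
move=> Xw0 simple_i.
suff : c i 0 * (Q^T *m w) i 0 = 0.
  by move/eqP; rewrite mulf_eq0 (negPf (c_neq0 i)) => /eqP.
apply: (moments_eq0_simple (w := fun j => c j 0 * (Q^T *m w) j 0) distinct_le).
  move=> t; transitivity ((X^T *m w) t 0); last by rewrite Xw0 mxE.
  rewrite Xmat_tr_mul_eig !mxE; apply: eq_bigr => j _.
  by rewrite mul_diag_mx !mxE; ring.
move=> j lji; apply/eqP; apply: contraNT simple_i => ji.
by apply/alg_mult_gt1P; exists j.
Qed.

Variable P : 'M[R]_(k.+1, n).
Hypothesis X_MP : is_MP_inverse X P.

Lemma residual_mulmx (v : 'cV[R]_n) :
  (A - Ymat A x0 k *m P) *m v = A *m (v - X *m P *m v).
Proof. by rewrite Ymat_Xmat mulmxBl mulmxBr !mulmxA. Qed.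

Lemma residual_norm_le (v : 'cV[R]_n) :
  norm2 v = 1 -> norm2 ((A - Ymat A x0 k *m P) *m v) <= L.
Proof.
move=> v1; set w := v - X *m P *m v.
have Xw0 : X^T *m w = 0 by rewrite mulmxBr mulmxA (MP_tr_proj X_MP) subrr.
have w_eig : w = Q *m (Q^T *m w) by rewrite mulmxA (mulmx1C QtQ) mul1mx.
have L_ge0 : 0 <= L by apply: bigmax_ge_id.
have eig_le i : (Q^T *m w) i 0 != 0 -> `|(\row_j lam j) 0 i| <= L.
  move=> zi; rewrite mxE; apply: le_bigmax_cond.
  by apply: contraR zi => simple_i; rewrite (Xmat_orth_simple Xw0 simple_i).
rewrite residual_mulmx -/w w_eig mulmxA eig_mulmx -mulmxA norm2E sqnorm_orthomx //.
rewrite -(ger0_norm L_ge0) -sqrtr_sqr ler_wsqrtr //.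
rewrite (le_trans (sqnorm_diag_mul_le eig_le)) //.
have sqw_le1 : sqnorm (Q^T *m w) <= 1.
  rewrite -(sqnorm_orthomx _ QtQ) -w_eig.
  rewrite (le_trans (sqnorm_sub_proj_le v (MP_proj_sym X_MP) (MP_proj_idem X_MP))) //.
  by rewrite -[sqnorm v]sqr_sqrtr ?sqnorm_ge0 // -norm2E v1 expr1n.
by rewrite ler_piMr ?sqr_ge0.
Qed.

Lemma residual_norm_attained : (exists i, (1 < alg_mult A (lam i))%N) ->
  exists2 v, norm2 v = 1 & norm2 ((A - Ymat A x0 k *m P) *m v) = L.
Proof.
case=> i1 mult_i1.
have [i0 mult_i0 ->] : exists2 i0, (1 < alg_mult A (lam i0))%N & L = `|lam i0|.
  rewrite /L (bigmax_eq_arg 0 i1) //.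
  by case: arg_maxP => // i0 mult_i0 _; exists i0.
have /alg_mult_gt1P[j ji0 lji0] := mult_i0.
(* Each x_t has coordinates [lam i0 ^+ t * c i0] and [lam i0 ^+ t * c j] on
   [col i0 Q] and [col j Q], so [u] is orthogonal to all of them. *)
set u := c j 0 *: col i0 Q - c i0 0 *: col j Q.
have Qtu : Q^T *m u = c j 0 *: delta_mx i0 0 - c i0 0 *: delta_mx j 0.
  by rewrite /u mulmxBr -!scalemxAr !colE !mulmxA QtQ !mul1mx.
have u_neq0 : u != 0.
  apply: contra_neq (c_neq0 j) => u0.
  move/colP/(_ i0): Qtu; rewrite u0 mulmx0 !mxE eqxx eq_sym (negPf ji0).
  by rewrite mulr1 mulr0 subr0 => /esym.
have Au : A *m u = lam i0 *: u.
  rewrite /u mulmxBr -!scalemxAr !eigQ lji0 scalerBr !scalerA.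
  by rewrite !(mulrC (lam i0)).
have Xu0 : X^T *m u = 0.
  apply/colP => t; rewrite Xmat_tr_mul_eig Qtu mulmxBr -!scalemxAr -!colE.
  by rewrite mul_diag_mx !mxE lji0; ring.
have residual_u : (A - Ymat A x0 k *m P) *m u = lam i0 *: u.
  by rewrite residual_mulmx (MP_proj_orth X_MP Xu0) subr0.
exists ((norm2 u)^-1 *: u); first exact: norm2_normalize.
by rewrite -scalemxAr residual_u scalerA mulrC -scalerA norm2Z norm2_normalize // mulr1.
Qed.

End Spectral.

Unset Implicit Arguments.

Theorem theorem4 (R : realType) (n : nat) (A : 'M[R]_n) (Q : 'M[R]_n)
  (lam : 'I_n -> R) (x0 : 'cV[R]_n) (k : nat) :
  A^T = A ->
  Q^T *m Q = 1%:M ->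
  (forall i : 'I_n, A *m col i Q = lam i *: col i Q) ->
  (forall i : 'I_n, ((col i Q)^T *m x0) 0 0 != 0) ->
  (exists i : 'I_n, (1 < alg_mult A (lam i))%N) ->
  (size (undup [seq lam i | i <- enum 'I_n]) <= k)%N ->
  spec_norm (A - Ymat A x0 k *m pinvMP (Xmat A x0 k))
  = \big[Num.max/0]_(i : 'I_n | (1 < alg_mult A (lam i))%N) `|lam i|.
Proof.
move=> _ QtQ eigQ x0_coord_neq0 mult_gt1 distinct_le.
have c_neq0 i : (Q^T *m x0) i 0 != 0.
  by have := x0_coord_neq0 i; rewrite tr_col -row_mul mxE.
have X_MP := is_MP_inverse_pinvMP (Xmat A x0 k).
apply: spec_norm_attained.
  by move=> v; apply: (residual_norm_le QtQ eigQ c_neq0 (leqW distinct_le) X_MP).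
exact: (residual_norm_attained QtQ eigQ c_neq0 X_MP mult_gt1).
Qed.
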